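(* Let $G$ be a profinite group, let $g\in G$, and let $K$ be the closed normal subgroup of $G$ generated by $g$. Then $d(K/[K,K])\le |G:C_G(g)K|$, where $C_G(g)$ is the centralizer of $g$ in $G$.
   Context: $[K,K]$ denotes the closed commutator subgroup of $K$, and $d(\cdot)$ denotes the minimal number of topological generators of a profinite group. *)

From HB Require Import structures.
From mathcomp Require Import all_boot all_order all_algebra.
From mathcomp Require Import all_classical all_reals all_analysis.
Set Implicit Arguments. Unset Strict Implicit. Unset Printing Implicit Defensive.
Local Open Scope classical_set_scope.

Section ProfiniteDefs.
Variables (T : topologicalType) (mul : T -> T -> T) (inv : T -> T) (one : T).

Definition is_profinite_group : Prop :=
  [/\ (forall x y z, mul x (mul y z) = mul (mul x y) z),
      (forall x, mul one x = x /\ mul x one = x),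
      (forall x, mul (inv x) x = one /\ mul x (inv x) = one),
      continuous (fun p : T * T => mul p.1 p.2) /\ continuous inv &
      [/\ compact [set: T], hausdorff_space T &
      totally_disconnected [set: T]]].

Definition is_subgroup (H : set T) : Prop :=
  [/\ H one, (forall x y, H x -> H y -> H (mul x y)) & (forall x, H x -> H (inv x))].

Definition is_normal (H : set T) : Prop :=
  forall x h, H h -> H (mul (mul (inv x) h) x).

Definition closed_gen (A : set T) : set T :=
  [set x | forall H, is_subgroup H -> closed H -> A `<=` H -> H x].

Definition closed_normal_closure (g : T) : set T :=
  [set x | forall H, is_subgroup H -> is_normal H -> closed H -> H g -> H x].

Definition commg (a b : T) : T := mul (mul (inv a) (inv b)) (mul a b).

Definition closed_commutator (K : set T) : set T :=
  closed_gen [set commg a b | a in K & b in K].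

Definition centralizer (g : T) : set T := [set x | mul x g = mul g x].

Definition set_mul (A B : set T) : set T := [set mul a b | a in A & b in B].

(* |G : H| <= n : G is covered by at most n left cosets of H *)
Definition index_le (H : set T) (n : nat) : Prop :=
  exists t : 'I_n -> T, forall x, exists i, exists2 h, H h & x = mul (t i) h.

(* d(K/N) <= n, for a closed normal subgroup N of the closed subgroup K:
   K/N is topologically generated by the images of n elements of K,
   i.e. K is the closed subgroup generated by N together with n elements. *)
Definition quot_gen_le (K N : set T) (n : nat) : Prop :=
  exists k : 'I_n -> T, (forall i, K (k i)) /\ closed_gen (N `|` range k) = K.

End ProfiniteDefs.

(* The closed normal subgroup K generated by g is topologically generated by
   the conjugates of g.  If t_1, ..., t_n are coset representatives of
   C_G(g)K, every y in G factors as y = t_i c k with c centralizing g and k in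
   K, so the conjugate of g by y is the conjugate of g by t_i times a
   commutator of two elements of K.  Hence the n conjugates of g by the t_i
   generate K modulo [K,K]. *)
From Pilot Require Import Defs.
From HB Require Import structures.
From mathcomp Require Import all_boot all_order all_algebra.
From mathcomp Require Import all_classical all_reals all_analysis.
Set Implicit Arguments. Unset Strict Implicit. Unset Printing Implicit Defensive.
Local Open Scope classical_set_scope.

Section ProfiniteGroup.
Variables (T : topologicalType) (mul : T -> T -> T) (inv : T -> T) (one : T).
Hypothesis HG : is_profinite_group mul inv one.

Local Notation cgen := (closed_gen mul inv one).
Local Notation subgroup := (is_subgroup mul inv one).

Lemma mulgA x y z : mul x (mul y z) = mul (mul x y) z.
Proof. by case: HG. Qed.

Lemma mul1g x : mul one x = x.
Proof. by case: HG => _ /(_ x) []. Qed.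

Lemma mulg1 x : mul x one = x.
Proof. by case: HG => _ /(_ x) []. Qed.

Lemma mulVg x : mul (inv x) x = one.
Proof. by case: HG => _ _ /(_ x) []. Qed.

Lemma mulgV x : mul x (inv x) = one.
Proof. by case: HG => _ _ /(_ x) []. Qed.

Lemma mulKg x y : mul (inv x) (mul x y) = y.
Proof. by rewrite mulgA mulVg mul1g. Qed.

Lemma mulKVg x y : mul x (mul (inv x) y) = y.
Proof. by rewrite mulgA mulgV mul1g. Qed.

Lemma invg_eq x y : mul x y = one -> inv x = y.
Proof. by move=> xy1; rewrite -[inv x]mulg1 -xy1 mulKg. Qed.

Lemma invg1 : inv one = one.
Proof. by apply: invg_eq; rewrite mul1g. Qed.

Lemma invgK x : inv (inv x) = x.
Proof. by apply: invg_eq; rewrite mulVg. Qed.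

Lemma invMg x y : inv (mul x y) = mul (inv y) (inv x).
Proof. by apply: invg_eq; rewrite -!mulgA mulKVg mulgV. Qed.

Definition conjg (y x : T) : T := mul (mul (inv y) x) y.

Lemma conj1g x : conjg one x = x.
Proof. by rewrite /conjg invg1 mul1g mulg1. Qed.

Lemma conjg1 y : conjg y one = one.
Proof. by rewrite /conjg mulg1 mulVg. Qed.

Lemma conjMg y a b : conjg y (mul a b) = mul (conjg y a) (conjg y b).
Proof. by rewrite /conjg -!mulgA mulKVg. Qed.

Lemma conjVg y a : conjg y (inv a) = inv (conjg y a).
Proof. by apply/esym/invg_eq; rewrite -conjMg mulgV conjg1. Qed.

Lemma conjgM x y z : conjg (mul y z) x = conjg z (conjg y x).
Proof. by rewrite /conjg invMg -!mulgA. Qed.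

Lemma conjg_centralizer t c x : mul c x = mul x c ->
  conjg (inv (mul t c)) x = conjg (inv t) x.
Proof.
by move=> cx; rewrite /conjg !invgK invMg -!mulgA (mulgA c) cx -mulgA mulKVg.
Qed.

Lemma conjg_mulV_commg y k x :
  conjg (inv (mul y k)) x =
  mul (Defs.commg mul inv (conjg (inv y) (inv k)) (conjg (inv y) (inv x)))
      (conjg (inv y) x).
Proof.
rewrite /Defs.commg -!conjVg -!conjMg !invgK invMg conjgM; congr conjg.
by rewrite /conjg invgK -!mulgA mulVg mulg1.
Qed.

Lemma conjg_continuous y : continuous (conjg y).
Proof.
have [_ _ _ [mul_cont _] _] := HG.
have mull a : continuous (mul a).
  move=> x; apply: (continuous2_cvg _ (mul_cont (a, x))) => //; exact: cvg_cst.
have mulr a : continuous (mul^~ a).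
  move=> x; apply: (continuous2_cvg _ (mul_cont (x, a))) => //; exact: cvg_cst.
by move=> x; apply: continuous_comp (mull _ x) (mulr _ _).
Qed.

Lemma closed_gen_min (A H : set T) :
  subgroup H -> closed H -> A `<=` H -> cgen A `<=` H.
Proof. by move=> sgH clH sAH x; apply. Qed.

Lemma sub_closed_gen (A : set T) : A `<=` cgen A.
Proof. by move=> x Ax H _ _; apply. Qed.

Lemma closed_gen_subgroup (A : set T) : subgroup (cgen A).
Proof.
split=> [H [] // | x y Ax Ay H sgH clH sAH | x Ax H sgH clH sAH];
  have [_ mulH invH] := sgH.
- by apply: mulH; [apply: Ax | apply: Ay].
- by apply: invH; apply: Ax.
Qed.

Lemma closed_gen_closed (A : set T) : closed (cgen A).
Proof.
have -> : cgen A = \bigcap_(H in [set H | [/\ subgroup H, closed H & A `<=` H]]) H.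
  apply/seteqP; split=> x Ax H => [[sgH clH sAH] | sgH clH sAH]; exact: Ax.
by apply: closed_bigI => H [].
Qed.

Lemma closed_gen_conj (A : set T) : (forall y a, A a -> A (conjg y a)) ->
  forall y x, cgen A x -> cgen A (conjg y x).
Proof.
move=> conjA y x Ax H [H1 mulH invH] clH sAH.
apply: (Ax [set h | H (conjg y h)]) => [||a /(conjA y)/sAH //].
- split=> /= [|a b Ha Hb|a Ha]; first by rewrite conjg1.
  + by rewrite conjMg; apply: mulH.
  + by rewrite conjVg; apply: invH.
- exact: (continuous_closedP _).1 (@conjg_continuous y) _ clH.
Qed.

Lemma closed_normal_closureE g :
  closed_normal_closure mul inv one g = cgen (range (conjg^~ g)).
Proof.
apply/seteqP; split=> x Kx.
- apply: Kx; [exact: closed_gen_subgroup | | exact: closed_gen_closed |].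
  + apply: closed_gen_conj => y _ [z _ <-].
    by exists (mul z y); rewrite // -conjgM.
  + by apply: sub_closed_gen; exists one; rewrite // conj1g.
- by move=> H sgH nH clH Hg; apply: Kx => // _ [y _ <-]; apply: nH.
Qed.

Section NormalClosure.
Variables (g : T) (n : nat) (t : 'I_n -> T).

Local Notation K := (closed_normal_closure mul inv one g).
Local Notation N := (closed_commutator mul inv one K).
Local Notation gens := (fun i => conjg (inv (t i)) g).

Lemma closed_normal_closure_subgroup : subgroup K.
Proof. by rewrite closed_normal_closureE; apply: closed_gen_subgroup. Qed.

Lemma closed_normal_closure_closed : closed K.
Proof. by rewrite closed_normal_closureE; apply: closed_gen_closed. Qed.

Lemma closed_normal_closure_conj y x : K x -> K (conjg y x).
Proof. by move=> Kx H sgH nH clH Hg; apply/nH/(Kx H). Qed.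

Lemma mem_closed_normal_closure : K g.
Proof. by move=> H. Qed.

Lemma mem_closed_normal_closure_conj y : K (conjg y g).
Proof. by apply: closed_normal_closure_conj; apply: mem_closed_normal_closure. Qed.

Lemma closed_commutator_sub : N `<=` K.
Proof.
have [_ mulK invK] := closed_normal_closure_subgroup.
apply: closed_gen_min => [||_ [a Ka [b Kb <-]]].
- exact: closed_normal_closure_subgroup.
- exact: closed_normal_closure_closed.
- by rewrite /Defs.commg; apply: (mulK); apply: (mulK); try apply: (invK).
Qed.

Lemma closed_gen_sub_closed_normal_closure : cgen (N `|` range gens) `<=` K.
Proof.
apply: closed_gen_min => [||_ [/closed_commutator_sub|[i _ <-]]] //.
- exact: closed_normal_closure_subgroup.
- exact: closed_normal_closure_closed.
- exact: mem_closed_normal_closure_conj.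
Qed.

Hypothesis cover :
  forall x, exists i, exists2 h, set_mul mul (centralizer mul g) K h & x = mul (t i) h.

Lemma conjg_mem_closed_gen y : cgen (N `|` range gens) (conjg y g).
Proof.
have [i [_ [c cg [k Kk <-]] yE]] := cover (inv y).
have [_ mulN _] := closed_gen_subgroup (N `|` range gens).
rewrite -[y]invgK yE mulgA conjg_mulV_commg (conjg_centralizer _ cg).
apply: mulN; apply: sub_closed_gen; [left | by right; exists i].
have [_ _ invK] := closed_normal_closure_subgroup.
apply: sub_closed_gen; exists (conjg (inv (mul (t i) c)) (inv k)).
  by apply: closed_normal_closure_conj; apply: invK.
exists (conjg (inv (mul (t i) c)) (inv g)) => //.
by apply: closed_normal_closure_conj; apply: invK; apply: mem_closed_normal_closure.
Qed.

Lemma closed_normal_closure_sub_closed_gen : K `<=` cgen (N `|` range gens).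
Proof.
move=> x; rewrite {1}closed_normal_closureE.
apply: closed_gen_min => [||_ [y _ <-]].
- exact: closed_gen_subgroup.
- exact: closed_gen_closed.
- exact: conjg_mem_closed_gen.
Qed.

End NormalClosure.
End ProfiniteGroup.

Theorem lemma3p1 (T : topologicalType) (mul : T -> T -> T) (inv : T -> T)
  (one : T) (HG : is_profinite_group mul inv one) (g : T) (n : nat) :
  let K := closed_normal_closure mul inv one g in
  index_le mul (set_mul mul (centralizer mul g) K) n ->
  quot_gen_le mul inv one K (closed_commutator mul inv one K) n.
Proof.
move=> /= [t cover]; exists (fun i => conjg mul inv (inv (t i)) g).
split=> [i|]; first exact: mem_closed_normal_closure_conj.
apply/seteqP; split.
- exact: (closed_gen_sub_closed_normal_closure HG).
- exact: (closed_normal_closure_sub_closed_gen HG cover).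
Qed.
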